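(* Every LSGA net is distributed.
   Context: A Petri net $N=(S,T,F,M_0,\ell)$ has disjoint $S,T$, $F:(S\times T)\cup(T\times S)\to\mathbb N$, $M_0\in\mathbb N^S$, labelling $\ell$. ${}^\bullet x(y)=F(y,x)$, $x^\bullet(y)=F(x,y)$. For a finite nonempty multiset $G$ of transitions, $M[G\rangle M'$ iff ${}^\bullet G\le M$ and $M'=M-{}^\bullet G+G^\bullet$; $t\smile u$ iff $M[\{t\}+\{u\}\rangle$ for some reachable $M$. A net is distributed iff there is a function $D$ on $S\cup T$ with (1) $s\in{}^\bullet t\Rightarrow D(t)=D(s)$ and (2) $t\smile u\Rightarrow D(t)\ne D(u)$. A component with interface is $(N,I,O)$ with $I,O\subseteq S$, $I\cap O=\emptyset$ and $o^\bullet=\emptyset$ for $o\in O$; it is sequential iff there is $Q\subseteq S\setminus(I\cup O)$ with $|{}^\bullet t\restriction Q|=|t^\bullet\restriction Q|=1$ for all $t\in T$ and $|M_0\restriction Q|=1$. For components $((S_k,T_k,F_k,M_{0k},\ell_k),I_k,O_k)$, $k\in K$, with $(S_k\cup T_k)\cap(S_l\cup T_l)=(I_k\cup O_k)\cap(I_l\cup O_l)$ and $I_k\cap I_l=\emptyset$ for $k\ne l$, the asynchronous parallel composition is $((\bigcup S_k,\bigcup T_k,\bigcup F_k,\sum M_{0k},\bigcup\ell_k),\bigcup I_k,\bigcup O_k\setminus\bigcup I_k)$. $N$ is an LSGA net iff $(N,I,O)$ equals the asynchronous parallel composition of some family of sequential components, for some $I,O$. *)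

From Stdlib Require Import List Arith.
Import ListNotations.

Set Implicit Arguments.

Section PetriNets.
(* Universes of place names P, transition names Tr and action labels A.
   S and T of a net are subsets of P and Tr (so S and T are disjoint). *)
Variables (P Tr A : Type).

Record net := Net {
  pl  : P -> Prop;
  tr  : Tr -> Prop;
  pre : P -> Tr -> nat;
  post : Tr -> P -> nat;
  m0  : P -> nat;
  lab : Tr -> A             (* labelling (only relevant on T) *)
}.

(* Functions are regarded as 0 outside the net's places/transitions. *)
Definition wf_net (N : net) : Prop :=
  (forall s t, pre N s t <> 0 -> pl N s /\ tr N t) /\
  (forall t s, post N t s <> 0 -> pl N s /\ tr N t) /\
  (forall s, m0 N s <> 0 -> pl N s).

Definition marking := P -> nat.

(* Finite multisets of transitions are represented by lists. *)
Definition preG (N : net) (G : list Tr) : marking :=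
  fun s => fold_right plus 0 (map (pre N s) G).
Definition postG (N : net) (G : list Tr) : marking :=
  fun s => fold_right plus 0 (map (fun t => post N t s) G).

Definition step (N : net) (M : marking) (G : list Tr) (M' : marking) : Prop :=
  G <> [] /\ (forall t, In t G -> tr N t) /\
  (forall s, preG N G s <= M s) /\
  (forall s, M' s = M s - preG N G s + postG N G s).

Inductive reachable (N : net) : marking -> Prop :=
| reach0 : reachable N (m0 N)
| reachS : forall M G M', reachable N M -> step N M G M' -> reachable N M'.

Definition concurrent (N : net) (t u : Tr) : Prop :=
  exists M M', reachable N M /\ step N M [t; u] M'.

Definition distributed (N : net) : Prop :=
  exists (L : Type) (D : P + Tr -> L),
    (forall s t, pl N s -> tr N t -> pre N s t <> 0 -> D (inr t) = D (inl s)) /\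
    (forall t u, tr N t -> tr N u -> concurrent N t u -> D (inr t) <> D (inr u)).

Record component := Comp { cnet : net; cI : P -> Prop; cO : P -> Prop }.

Definition is_component (C : component) : Prop :=
  wf_net (cnet C) /\
  (forall s, cI C s -> pl (cnet C) s) /\
  (forall s, cO C s -> pl (cnet C) s) /\
  (forall s, ~ (cI C s /\ cO C s)) /\
  (forall o t, cO C o -> pre (cnet C) o t = 0).

Definition size_one_on (Q : P -> Prop) (f : P -> nat) : Prop :=
  exists q, Q q /\ f q = 1 /\ (forall q', Q q' -> q' <> q -> f q' = 0).

Definition sequential (C : component) : Prop :=
  is_component C /\
  exists Q : P -> Prop,
    (forall s, Q s -> pl (cnet C) s /\ ~ cI C s /\ ~ cO C s) /\
    (forall t, tr (cnet C) t ->
       size_one_on Q (fun s => pre (cnet C) s t) /\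
       size_one_on Q (fun s => post (cnet C) t s)) /\
    size_one_on Q (m0 (cnet C)).

Definition composable (K : Type) (C : K -> component) : Prop :=
  forall k l, k <> l ->
    (forall s, pl (cnet (C k)) s /\ pl (cnet (C l)) s <->
               (cI (C k) s \/ cO (C k) s) /\ (cI (C l) s \/ cO (C l) s)) /\
    (forall t, ~ (tr (cnet (C k)) t /\ tr (cnet (C l)) t)) /\
    (forall s, ~ (cI (C k) s /\ cI (C l) s)).

(* (N, I, O) equals the asynchronous parallel composition of (C k)_{k in K}.
   The sum of initial markings must be well defined (finitely many nonzero
   summands at each place). *)
Definition is_async_composition (K : Type) (C : K -> component)
    (N : net) (I O : P -> Prop) : Prop :=
  (forall s, pl N s <-> exists k, pl (cnet (C k)) s) /\
  (forall t, tr N t <-> exists k, tr (cnet (C k)) t) /\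
  (forall k t, tr (cnet (C k)) t ->
      (forall s, pre N s t = pre (cnet (C k)) s t /\
                 post N t s = post (cnet (C k)) t s) /\
      lab N t = lab (cnet (C k)) t) /\
  (forall s, exists ks : list K, NoDup ks /\
      (forall k, m0 (cnet (C k)) s <> 0 -> In k ks) /\
      m0 N s = fold_right plus 0 (map (fun k => m0 (cnet (C k)) s) ks)) /\
  (forall s, I s <-> exists k, cI (C k) s) /\
  (forall s, O s <-> (exists k, cO (C k) s) /\ ~ (exists k, cI (C k) s)).

Definition LSGA (N : net) : Prop :=
  wf_net N /\
  exists (I O : P -> Prop) (K : Type) (C : K -> component),
    (forall k, sequential (C k)) /\ composable C /\
    is_async_composition C N I O.

End PetriNets.

(** Each sequential component carries exactly one token on its state places
    [Q] in every reachable marking: [Q] is private to the component, every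
    transition of the component moves the token within [Q], and no other
    transition touches [Q].  Two transitions of the same component therefore
    never fire concurrently, since together they would need two tokens on [Q].
    A net is then distributed by locating every transition in its component,
    and every place in the component of the transitions consuming from it
    (unique, because input places of different components are disjoint and
    output places are never consumed from). *)

From Stdlib Require Import List Lia Classical FunctionalExtensionality PropExtensionality.
Import ListNotations.

Set Implicit Arguments.
Unset Strict Implicit.

Section Sums.
Variables (X : Type) (f : X -> nat).

Lemma sum_map_mid l1 x l2 :
  fold_right plus 0 (map f (l1 ++ x :: l2)) = f x + fold_right plus 0 (map f (l1 ++ l2)).
Proof. induction l1 as [|y l1 IH]; simpl; [reflexivity | rewrite IH; lia]. Qed.

Lemma sum_map_ge l x : In x l -> f x <= fold_right plus 0 (map f l).
Proof. induction l as [|y l IH]; simpl; [tauto|]. intros [->|Hx]; [lia | specialize (IH Hx); lia]. Qed.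

Lemma sum_map_zero l : (forall x, In x l -> f x = 0) -> fold_right plus 0 (map f l) = 0.
Proof. induction l as [|y l IH]; simpl; intros H0; [reflexivity | rewrite H0, IH; auto]. Qed.

Lemma sum_map_single l x :
  NoDup l -> (forall y, y <> x -> f y = 0) -> (f x <> 0 -> In x l) ->
  fold_right plus 0 (map f l) = f x.
Proof.
  induction l as [|y l IH]; simpl; intros Hnd H0 Hin.
  - apply NNPP. intros Hfx. exact (Hin (fun E => Hfx (eq_sym E))).
  - inversion Hnd as [|? ? Hy Hnd']; subst. destruct (classic (y = x)) as [->|Hne].
    + rewrite sum_map_zero; [lia|]. intros z Hz. apply H0. intros ->. contradiction.
    + rewrite H0 by auto. apply IH; auto.
      intros Hfx. destruct (Hin Hfx); [congruence | auto].
Qed.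

End Sums.

Section SizeOne.
Variables (P : Type) (Q : P -> Prop).

Lemma size_one_on_ext (f g : P -> nat) :
  (forall q, Q q -> f q = g q) -> size_one_on Q f -> size_one_on Q g.
Proof.
  intros Efg [q0 [Hq0 [E1 E0]]]. exists q0.
  split; [exact Hq0 | split; [rewrite <- Efg | intros q Hq Hne; rewrite <- Efg]; auto].
Qed.

Lemma size_one_on_le_eq (M f : P -> nat) q :
  size_one_on Q M -> size_one_on Q f -> (forall q, Q q -> f q <= M q) ->
  Q q -> f q = M q.
Proof.
  intros [q0 [Hq0 [M1 M0]]] [a [Ha [f1 f0]]] Hle Hq.
  assert (a = q0) as ->.
  { destruct (classic (a = q0)) as [|Hne]; [auto|].
    specialize (Hle a Ha). rewrite M0 in Hle by auto. lia. }
  destruct (classic (q = q0)) as [->|Hne]; [congruence | rewrite M0, f0; auto].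
Qed.

Lemma size_one_on_fire (M f g : P -> nat) :
  size_one_on Q M -> size_one_on Q f -> size_one_on Q g ->
  (forall q, Q q -> f q <= M q) -> size_one_on Q (fun q => M q - f q + g q).
Proof.
  intros HM Hf Hg Hle. apply (@size_one_on_ext g); [|exact Hg].
  intros q Hq. rewrite (size_one_on_le_eq HM Hf Hle Hq). lia.
Qed.

Lemma size_one_on_not_sum_le (M f g : P -> nat) :
  size_one_on Q M -> size_one_on Q f -> size_one_on Q g ->
  ~ (forall q, Q q -> f q + g q <= M q).
Proof.
  intros HM Hf Hg Hle.
  assert (Ef : forall q, Q q -> f q = M q).
  { intros q Hq. apply (size_one_on_le_eq HM Hf); [|exact Hq].
    intros q' Hq'. specialize (Hle q' Hq'). lia. }
  destruct Hg as [b [Hb [g1 _]]].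
  specialize (Hle b Hb). rewrite g1, Ef in Hle by auto. lia.
Qed.

End SizeOne.

Definition state_places (P Tr A : Type) (C : component P Tr A) (Q : P -> Prop) : Prop :=
  (forall s, Q s -> pl (cnet C) s /\ ~ cI C s /\ ~ cO C s) /\
  (forall t, tr (cnet C) t ->
     size_one_on Q (fun s => pre (cnet C) s t) /\
     size_one_on Q (fun s => post (cnet C) t s)) /\
  size_one_on Q (m0 (cnet C)).

Lemma sequential_state_places (P Tr A : Type) (C : component P Tr A) :
  sequential C -> exists Q, state_places C Q.
Proof. intros [_ HQ]. exact HQ. Qed.

Section Composition.
Variables (P Tr A K : Type) (N : net P Tr A) (C : K -> component P Tr A) (I O : P -> Prop).
Hypothesis sequential_C : forall k, sequential (C k).
Hypothesis composable_C : composable C.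
Hypothesis composition_N : is_async_composition C N I O.

Lemma component_wf k : wf_net (cnet (C k)).
Proof. exact (proj1 (proj1 (sequential_C k))). Qed.

Lemma pre_output_place k o t : cO (C k) o -> pre (cnet (C k)) o t = 0.
Proof. destruct (sequential_C k) as [[_ [_ [_ [_ H]]]] _]. apply H. Qed.

Lemma shared_place_interface k l s :
  k <> l -> pl (cnet (C k)) s -> pl (cnet (C l)) s ->
  (cI (C k) s \/ cO (C k) s) /\ (cI (C l) s \/ cO (C l) s).
Proof. intros Hkl Hk Hl. apply (proj1 (composable_C Hkl) s). auto. Qed.

(* A place consumed from in two components would be an input of both. *)
Lemma consumer_component_unique k l s t t' :
  pre (cnet (C k)) s t <> 0 -> pre (cnet (C l)) s t' <> 0 -> k = l.
Proof.
  intros Hk Hl. destruct (classic (k = l)) as [|Hkl]; [auto|]. exfalso.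
  destruct (proj1 (component_wf k) s t Hk) as [Hsk _].
  destruct (proj1 (component_wf l) s t' Hl) as [Hsl _].
  destruct (shared_place_interface Hkl Hsk Hsl) as [[Ik|Ok] [Il|Ol]].
  - exact (proj2 (proj2 (composable_C Hkl)) s (conj Ik Il)).
  - exact (Hl (pre_output_place t' Ol)).
  - exact (Hk (pre_output_place t Ok)).
  - exact (Hk (pre_output_place t Ok)).
Qed.

Lemma tr_net_component t : tr N t -> exists k, tr (cnet (C k)) t.
Proof. apply (proj1 (proj2 composition_N)). Qed.

Lemma pre_post_net k t s :
  tr (cnet (C k)) t -> pre N s t = pre (cnet (C k)) s t /\ post N t s = post (cnet (C k)) t s.
Proof. intros Ht. apply (proj1 (proj1 (proj2 (proj2 composition_N)) k t Ht)). Qed.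

Section StatePlaces.
Variables (k : K) (Q : P -> Prop).
Hypothesis Q_state : state_places (C k) Q.

Lemma state_place_private l q : Q q -> pl (cnet (C l)) q -> l = k.
Proof.
  intros Hq Hl. destruct (classic (l = k)) as [|Hlk]; [auto|]. exfalso.
  destruct (proj1 Q_state q Hq) as [Hk [HnI HnO]].
  destruct (shared_place_interface (fun E => Hlk (eq_sym E)) Hk Hl) as [[|] _]; auto.
Qed.

Lemma state_place_untouched q t :
  Q q -> tr N t -> ~ tr (cnet (C k)) t -> pre N q t = 0 /\ post N t q = 0.
Proof.
  intros Hq Ht Hnk. destruct (tr_net_component Ht) as [l Hl].
  destruct (pre_post_net q Hl) as [-> ->].
  assert (Hlk : l <> k) by (intros ->; contradiction).
  destruct (component_wf l) as [Hpre [Hpost _]].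
  split; apply NNPP; intros H0; apply Hlk, (state_place_private Hq).
  - exact (proj1 (Hpre q t H0)).
  - exact (proj1 (Hpost t q H0)).
Qed.

Lemma m0_state_place : size_one_on Q (m0 N).
Proof.
  apply (@size_one_on_ext _ _ (m0 (cnet (C k)))); [|exact (proj2 (proj2 Q_state))].
  intros q Hq. destruct (proj1 (proj2 (proj2 (proj2 composition_N))) q) as [ks [Hnd [Hcov ->]]].
  symmetry. apply (@sum_map_single _ (fun l => m0 (cnet (C l)) q)); auto.
  intros l Hlk. apply NNPP. intros H0. apply Hlk, (state_place_private Hq).
  exact (proj2 (proj2 (component_wf l)) q H0).
Qed.

Lemma two_transitions_not_enabled M l1 t l2 t' :
  size_one_on Q M -> (forall s, preG N (l1 ++ t :: l2) s <= M s) ->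
  In t' (l1 ++ l2) -> tr (cnet (C k)) t -> ~ tr (cnet (C k)) t'.
Proof.
  intros HM Hle Hin Ht Ht'.
  apply (size_one_on_not_sum_le HM (proj1 (proj1 (proj2 Q_state) t Ht))
                                   (proj1 (proj1 (proj2 Q_state) t' Ht'))).
  intros q _. rewrite <- (proj1 (pre_post_net q Ht)), <- (proj1 (pre_post_net q Ht')).
  specialize (Hle q). unfold preG in Hle. rewrite sum_map_mid in Hle.
  pose proof (sum_map_ge (pre N q) Hin). lia.
Qed.

Lemma step_state_places M G M' :
  size_one_on Q M -> step N M G M' -> size_one_on Q M'.
Proof.
  intros HM [_ [HG [Hle EM']]].
  destruct (classic (exists t, In t G /\ tr (cnet (C k)) t)) as [[t [Hin Ht]]|Hnone].
  - destruct (in_split _ _ Hin) as [l1 [l2 ->]].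
    assert (Hrest : forall q t', Q q -> In t' (l1 ++ l2) -> pre N q t' = 0 /\ post N t' q = 0).
    { intros q t' Hq Ht'. apply state_place_untouched; auto.
      - apply HG. apply in_app_or in Ht'. apply in_or_app. simpl. tauto.
      - exact (two_transitions_not_enabled HM Hle Ht' Ht). }
    destruct (proj1 (proj2 Q_state) t Ht) as [Hpre Hpost].
    refine (size_one_on_ext _ (size_one_on_fire HM Hpre Hpost _)).
    + intros q Hq. rewrite EM'. unfold preG, postG. rewrite !sum_map_mid.
      rewrite !sum_map_zero by (intros t' Ht'; apply (Hrest q t' Hq Ht')).
      destruct (pre_post_net q Ht) as [-> ->]. lia.
    + intros q _. rewrite <- (proj1 (pre_post_net q Ht)).
      specialize (Hle q). unfold preG in Hle. rewrite sum_map_mid in Hle. lia.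
  - refine (size_one_on_ext _ HM). intros q Hq.
    assert (Hall : forall t', In t' G -> pre N q t' = 0 /\ post N t' q = 0).
    { intros t' Ht'. apply state_place_untouched; auto. intros Htk. apply Hnone; eauto. }
    rewrite EM'. unfold preG, postG.
    rewrite !sum_map_zero by (intros t' Ht'; apply (Hall t' Ht')). lia.
Qed.

Lemma reachable_state_places M : reachable N M -> size_one_on Q M.
Proof.
  induction 1 as [|M G M' _ IH Hstep].
  - exact m0_state_place.
  - exact (step_state_places IH Hstep).
Qed.

End StatePlaces.

Lemma concurrent_components_differ k t u :
  concurrent N t u -> tr (cnet (C k)) t -> ~ tr (cnet (C k)) u.
Proof.
  intros [M [M' [HR [_ [_ [Hle _]]]]]] Ht.
  destruct (sequential_state_places (sequential_C k)) as [Q HQ].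
  exact (@two_transitions_not_enabled k Q HQ M [] t [u] u
           (reachable_state_places HQ HR) Hle (or_introl eq_refl) Ht).
Qed.

Lemma async_composition_distributed : distributed N.
Proof.
  exists (K -> Prop).
  exists (fun x => match x with
           | inl s => fun k => exists t, pre (cnet (C k)) s t <> 0
           | inr t => fun k => tr (cnet (C k)) t
           end).
  split.
  - intros s t _ Ht Hst. destruct (tr_net_component Ht) as [k Hk].
    rewrite (proj1 (pre_post_net s Hk)) in Hst.
    apply functional_extensionality. intros l. apply propositional_extensionality. split.
    + intros Hl. exists t.
      rewrite <- (proj1 (pre_post_net s Hl)), (proj1 (pre_post_net s Hk)). exact Hst.
    + intros [t' Hl]. rewrite <- (consumer_component_unique Hst Hl). exact Hk.
  - intros t u Ht _ Htu HD. destruct (tr_net_component Ht) as [k Hk].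
    apply (concurrent_components_differ Htu Hk).
    exact (eq_ind _ (fun D => D k) Hk _ HD).
Qed.

End Composition.

Theorem corollary4p13 (P Tr A : Type) (N : net P Tr A) :
  LSGA N -> distributed N.
Proof.
  intros [_ [I [O [K [C [Hseq [Hcomp Hasync]]]]]]].
  exact (async_composition_distributed Hseq Hcomp Hasync).
Qed.
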